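(* Let $M\subset\mathbb{R}^2$ be open with coordinates $(x,u)$, let $M^{(1)}$ be the first-order jet space with coordinates $(x,u,u_x)$, and consider the ODE $u_{xx}=\phi(x,u,u_x)$ with associated vector field $\mathbf{A}=\partial_x+u_x\partial_u+\phi\,\partial_{u_x}$. Let $(\partial_u,\lambda_1)$ and $(\partial_u,\lambda_2)$ be the canonical representatives of two non-equivalent generalized $\mathcal{C}^\infty$-symmetries of this ODE. Let $\mathbf{X}_i=\partial_u+\lambda_i\partial_{u_x}$, $\rho=\dfrac{\mathbf{X}_1(\lambda_2)-\mathbf{X}_2(\lambda_1)}{\lambda_1-\lambda_2}$, let $f_1,f_2\in C^\infty(M^{(1)})$ satisfy $\dfrac{\mathbf{X}_1(f_2)}{f_2}=\dfrac{\mathbf{X}_2(f_1)}{f_1}=\rho$, let $\mathbf{Y}_i=f_i\mathbf{X}_i$, $\rho_i=\lambda_i-\mathbf{A}(f_i)/f_i$, and let $g_1,g_2\in C^\infty(M^{(1)})$ satisfy $\mathbf{A}(g_1)=\rho_1g_1$, $\mathbf{Y}_2(g_1)=0$, $\mathbf{A}(g_2)=\rho_2g_2$, $\mathbf{Y}_1(g_2)=0$. Then: (1) The functions $$\mu_1=\frac{1}{f_2g_2(\lambda_2-\lambda_1)},\qquad \mu_2=\frac{1}{f_1g_1(\lambda_1-\lambda_2)}$$ are integrating factors of the ODE; a first integral $I_1$ (resp. $I_2$) of $\mathbf{A}$ associated to $(\partial_u,\lambda_1)$ (resp. $(\partial_u,\lambda_2)$) can be obtained by quadratures from $(I_1)_x=\mu_1(\lambda_1u_x-\phi)$,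 $(I_1)_u=-\lambda_1\mu_1$, $(I_1)_{u_x}=\mu_1$ (resp. $(I_2)_x=\mu_2(\lambda_2u_x-\phi)$, $(I_2)_u=-\lambda_2\mu_2$, $(I_2)_{u_x}=\mu_2$). (2) The function $$M=\frac{1}{f_1g_1f_2g_2(\lambda_2-\lambda_1)}$$ is a Jacobi last multiplier of the ODE.
   Context: All functions are smooth on $M^{(1)}$ and all statements are local, on an open set where $\lambda_1-\lambda_2$, $f_1,f_2,g_1,g_2$ do not vanish. For smooth $\xi,\eta,\lambda$ on $M^{(1)}$ and $\mathbf{v}=\xi\partial_x+\eta\partial_u$, the $\lambda$-prolongation is $\mathbf{v}^{[\lambda,(1)]}=\mathbf{v}+\big((\mathbf{A}+\lambda)(\eta)-(\mathbf{A}+\lambda)(\xi)u_x\big)\partial_{u_x}$. The pair $(\mathbf{v},\lambda)$ is a generalized $\mathcal{C}^\infty$-symmetry of the ODE if $[\mathbf{v}^{[\lambda,(1)]},\mathbf{A}]=\lambda\,\mathbf{v}^{[\lambda,(1)]}-(\mathbf{A}+\lambda)(\xi)\,\mathbf{A}$. A first integral of $\mathbf{A}$ associated to $(\mathbf{v},\lambda)$ is a function $I$ with $\mathbf{A}(I)=\mathbf{v}^{[\lambda,(1)]}(I)=0$. Two generalized $\mathcal{C}^\infty$-symmetries are $\mathbf{A}$-equivalent if $\{\mathbf{A},\mathbf{v}_1^{[\lambda_1,(1)]},\mathbf{v}_2^{[\lambda_2,(1)]}\}$ is linearly dependent over $C^\infty(M^{(1)})$; if $Q=\eta-\xi u_x$,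 the canonical representative of the class of $(\mathbf{v},\lambda)$ is $(\partial_u,\lambda+\mathbf{A}(Q)/Q)$. An integrating factor of the ODE is a function $\mu(x,u,u_x)$ such that $\mu\,(u_{xx}-\phi)=\mathbf{D}_x(I)$ for some function $I(x,u,u_x)$, where $\mathbf{D}_x=\partial_x+u_x\partial_u+u_{xx}\partial_{u_x}+\cdots$ is the total derivative. A Jacobi last multiplier of the ODE is a function $M(x,u,u_x)$ with $\mathbf{A}(M)+M\,\phi_{u_x}=0$. *)

From Stdlib Require Import Reals List.
From Coquelicot Require Import Coquelicot.
Open Scope R_scope.

(* Functions on the jet space M^(1) with coordinates (x,u,p), p = u_x. *)
Definition fn3 := R -> R -> R -> R.

Definition open3 (U : R -> R -> R -> Prop) : Prop :=
  forall x u p, U x u p -> exists r, 0 < r /\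
    forall x' u' p', Rabs (x' - x) < r -> Rabs (u' - u) < r -> Rabs (p' - p) < r ->
      U x' u' p'.

Definition continuous3_at (f : fn3) x u p : Prop :=
  forall eps, 0 < eps -> exists d, 0 < d /\
    forall x' u' p', Rabs (x' - x) < d -> Rabs (u' - u) < d -> Rabs (p' - p) < d ->
      Rabs (f x' u' p' - f x u p) < eps.

Definition d_x (f : fn3) : fn3 := fun x u p => Derive (fun t => f t u p) x.
Definition d_u (f : fn3) : fn3 := fun x u p => Derive (fun t => f x t p) u.
Definition d_p (f : fn3) : fn3 := fun x u p => Derive (fun t => f x u t) p.

Inductive dir := Dx | Du | Dp.

Definition dpart (d : dir) : fn3 -> fn3 :=
  match d with Dx => d_x | Du => d_u | Dp => d_p end.

Definition ex_dpart (d : dir) (f : fn3) x u p : Prop :=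
  match d with
  | Dx => ex_derive (fun t => f t u p) x
  | Du => ex_derive (fun t => f x t p) u
  | Dp => ex_derive (fun t => f x u t) p
  end.

Fixpoint iter_part (l : list dir) (f : fn3) : fn3 :=
  match l with nil => f | d :: l' => dpart d (iter_part l' f) end.

Definition smooth_on (U : R -> R -> R -> Prop) (f : fn3) : Prop :=
  forall (l : list dir) x u p, U x u p ->
    continuous3_at (iter_part l f) x u p /\
    forall d, ex_dpart d (iter_part l f) x u p.

Record vfield := VF { vx : fn3; vu : fn3; vp : fn3 }.

Definition vapp (V : vfield) (f : fn3) : fn3 :=
  fun x u p => vx V x u p * d_x f x u p + vu V x u p * d_u f x u p
             + vp V x u p * d_p f x u p.

Definition lie (V W : vfield) : vfield :=
  VF (fun x u p => vapp V (vx W) x u p - vapp W (vx V) x u p)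
     (fun x u p => vapp V (vu W) x u p - vapp W (vu V) x u p)
     (fun x u p => vapp V (vp W) x u p - vapp W (vp V) x u p).

Definition veq_on (U : R -> R -> R -> Prop) (V W : vfield) : Prop :=
  forall x u p, U x u p ->
    vx V x u p = vx W x u p /\ vu V x u p = vu W x u p /\ vp V x u p = vp W x u p.

Definition Afield (phi : fn3) : vfield :=
  VF (fun _ _ _ => 1) (fun _ _ p => p) phi.

Definition Aplus (phi lam h : fn3) : fn3 :=
  fun x u p => vapp (Afield phi) h x u p + lam x u p * h x u p.

Definition prol (phi xi eta lam : fn3) : vfield :=
  VF xi eta (fun x u p => Aplus phi lam eta x u p - Aplus phi lam xi x u p * p).

Definition gen_sym (U : R -> R -> R -> Prop) (phi xi eta lam : fn3) : Prop :=
  smooth_on U xi /\ smooth_on U eta /\ smooth_on U lam /\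
  veq_on U (lie (prol phi xi eta lam) (Afield phi))
    (VF (fun x u p => lam x u p * vx (prol phi xi eta lam) x u p
                      - Aplus phi lam xi x u p * vx (Afield phi) x u p)
        (fun x u p => lam x u p * vu (prol phi xi eta lam) x u p
                      - Aplus phi lam xi x u p * vu (Afield phi) x u p)
        (fun x u p => lam x u p * vp (prol phi xi eta lam) x u p
                      - Aplus phi lam xi x u p * vp (Afield phi) x u p)).

Definition lin_dep3 (U : R -> R -> R -> Prop) (V1 V2 V3 : vfield) : Prop :=
  exists a b c : fn3, smooth_on U a /\ smooth_on U b /\ smooth_on U c /\
    (exists x u p, U x u p /\ (a x u p <> 0 \/ b x u p <> 0 \/ c x u p <> 0)) /\
    forall x u p, U x u p ->
      a x u p * vx V1 x u p + b x u p * vx V2 x u p + c x u p * vx V3 x u p = 0 /\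
      a x u p * vu V1 x u p + b x u p * vu V2 x u p + c x u p * vu V3 x u p = 0 /\
      a x u p * vp V1 x u p + b x u p * vp V2 x u p + c x u p * vp V3 x u p = 0.

Definition A_equiv (U : R -> R -> R -> Prop) (phi xi1 eta1 lam1 xi2 eta2 lam2 : fn3)
  : Prop :=
  lin_dep3 U (Afield phi) (prol phi xi1 eta1 lam1) (prol phi xi2 eta2 lam2).

Definition canon_lambda (phi xi eta lam : fn3) : fn3 :=
  fun x u p => lam x u p +
    vapp (Afield phi) (fun x u p => eta x u p - xi x u p * p) x u p
    / (eta x u p - xi x u p * p).

Definition zero3 : fn3 := fun _ _ _ => 0.
Definition one3 : fn3 := fun _ _ _ => 1.

Definition is_canonical_rep (U : R -> R -> R -> Prop) (phi lam : fn3) : Prop :=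
  exists xi eta lam0 : fn3, gen_sym U phi xi eta lam0 /\
    (forall x u p, U x u p -> eta x u p - xi x u p * p <> 0) /\
    forall x u p, U x u p -> lam x u p = canon_lambda phi xi eta lam0 x u p.

Definition first_integral_assoc (U : R -> R -> R -> Prop) (phi xi eta lam I : fn3)
  : Prop :=
  smooth_on U I /\
  forall x u p, U x u p ->
    vapp (Afield phi) I x u p = 0 /\ vapp (prol phi xi eta lam) I x u p = 0.

Definition open_nbhd_in (U V : R -> R -> R -> Prop) x u p : Prop :=
  open3 V /\ V x u p /\ (forall x' u' p', V x' u' p' -> U x' u' p').

(* mu is an integrating factor (locally on U): mu (u_xx - phi) = D_x I,
   with u_xx a free jet coordinate q. *)
Definition integrating_factor (U : R -> R -> R -> Prop) (phi mu : fn3) : Prop :=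
  forall x u p, U x u p -> exists (V : R -> R -> R -> Prop) (I : fn3),
    open_nbhd_in U V x u p /\ smooth_on V I /\
    forall x' u' p' q, V x' u' p' ->
      mu x' u' p' * (q - phi x' u' p')
      = d_x I x' u' p' + p' * d_u I x' u' p' + q * d_p I x' u' p'.

Definition jacobi_last_multiplier (U : R -> R -> R -> Prop) (phi M : fn3) : Prop :=
  forall x u p, U x u p -> vapp (Afield phi) M x u p + M x u p * d_p phi x u p = 0.

Definition Xf (lam : fn3) : vfield := VF zero3 one3 lam.

From Pilot Require Import Defs.
From Stdlib Require Import Reals Lra List.
From Coquelicot Require Import Coquelicot.
Open Scope R_scope.

(* For the canonical representative (d_u, lam) the symmetry condition reduces to the
   determining equation A(lam) = phi_u + lam phi_{u_x} - lam^2.  Given this equation, the form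
   mu (lam u_x - phi) dx - lam mu du + mu du_x is closed as soon as
   X_lam(mu) = - mu d_{u_x} lam and A(mu) = (lam - phi_{u_x}) mu.  A local potential I (Poincare
   lemma on a box, integrating along coordinate segments) then has D_x I = mu (u_xx - phi), and
   since the form annihilates A and X_lam, I is a first integral associated to (d_u, lam).
   For mu_i = 1/h with h = f_j g_j (lam_j - lam_i) these conditions read
   A(h)/h = phi_{u_x} - lam_i and X_i(h)/h = d_{u_x} lam_i, which follow from the equations for
   f_j, g_j and rho.  Finally the denominator H of M satisfies A(H)/H = phi_{u_x}, which is the
   last multiplier equation for 1/H. *)

(** * Continuity and partial derivatives in three variables *)

Definition uncurry3 (f : fn3) (z : R * (R * R)) : R :=
  f (fst z) (fst (snd z)) (snd (snd z)).

Lemma continuous3_at_continuous f x u p :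
  continuous3_at f x u p <-> continuous (uncurry3 f) (x, (u, p)).
Proof.
  split.
  - intros H. apply filterlim_locally. intros eps.
    destruct (H eps (cond_pos eps)) as [d [Hd Hd']].
    exists (mkposreal d Hd). intros [x' [u' p']] [H1 [H2 H3]].
    apply Hd'; assumption.
  - intros H eps Heps.
    destruct (proj1 (filterlim_locally _ _) H (mkposreal eps Heps)) as [d Hd].
    exists d. split; [apply cond_pos|]. intros x' u' p' H1 H2 H3.
    apply (Hd (x', (u', p'))). repeat split; assumption.
Qed.

Lemma continuous3_at_plus f g x u p :
  continuous3_at f x u p -> continuous3_at g x u p ->
  continuous3_at (fun x u p => f x u p + g x u p) x u p.
Proof.
  rewrite !continuous3_at_continuous. exact (continuous_plus (uncurry3 f) (uncurry3 g) _).
Qed.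

Lemma continuous3_at_minus f g x u p :
  continuous3_at f x u p -> continuous3_at g x u p ->
  continuous3_at (fun x u p => f x u p - g x u p) x u p.
Proof.
  rewrite !continuous3_at_continuous. exact (continuous_minus (uncurry3 f) (uncurry3 g) _).
Qed.

Lemma continuous3_at_mult f g x u p :
  continuous3_at f x u p -> continuous3_at g x u p ->
  continuous3_at (fun x u p => f x u p * g x u p) x u p.
Proof.
  rewrite !continuous3_at_continuous. exact (continuous_mult (uncurry3 f) (uncurry3 g) _).
Qed.

Lemma continuous3_at_inv f x u p :
  continuous3_at f x u p -> f x u p <> 0 ->
  continuous3_at (fun x u p => / f x u p) x u p.
Proof.
  rewrite !continuous3_at_continuous. intros Hf Hnz.
  apply (continuous_comp (uncurry3 f) Rinv _ Hf). exact (continuous_Rinv _ Hnz).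
Qed.

Lemma continuous3_at_const c x u p : continuous3_at (fun _ _ _ => c) x u p.
Proof.
  intros eps Heps. exists 1. split; [lra|]. intros. rewrite Rminus_diag, Rabs_R0. exact Heps.
Qed.

Lemma continuous3_at_coord_p x u p : continuous3_at (fun _ _ p => p) x u p.
Proof. intros eps Heps. exists eps. split; [exact Heps|]. intros. assumption. Qed.

Lemma locally_of_ball (x : R) (P : R -> Prop) r :
  0 < r -> (forall y, Rabs (y - x) < r -> P y) -> locally x P.
Proof. intros Hr H. exists (mkposreal r Hr). exact H. Qed.

Section Slices.
Variables (f : fn3) (x u p : R).
Hypothesis Hf : continuous3_at f x u p.

Local Ltac slice := intros eps; destruct (Hf eps (cond_pos eps)) as [d [Hd H]];
  first [apply (locally_of_ball _ _ d Hd) | exists (mkposreal d Hd)]; intros;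
  apply H; try rewrite Rminus_diag, Rabs_R0; assumption.

Lemma continuous3_at_slice_x : continuous (fun t => f t u p) x.
Proof. apply filterlim_locally. slice. Qed.

Lemma continuous3_at_slice_u : continuous (fun t => f x t p) u.
Proof. apply filterlim_locally. slice. Qed.

Lemma continuous3_at_slice_p : continuous (fun t => f x u t) p.
Proof. apply filterlim_locally. slice. Qed.

Lemma continuous3_at_slice_xu : continuity_2d_pt (fun s t => f s t p) x u.
Proof. slice. Qed.

Lemma continuous3_at_slice_xp : continuity_2d_pt (fun s t => f s u t) x p.
Proof. slice. Qed.

Lemma continuous3_at_slice_up : continuity_2d_pt (fun s t => f x s t) u p.
Proof. slice. Qed.

End Slices.

Lemma continuous3_at_locally_bounded f x u p :
  continuous3_at f x u p -> exists d K, 0 < d /\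
    forall x' u' p', Rabs (x' - x) < d -> Rabs (u' - u) < d -> Rabs (p' - p) < d ->
      Rabs (f x' u' p') <= K.
Proof.
  intros Hf. destruct (Hf 1 Rlt_0_1) as [d [Hd H]].
  exists d, (Rabs (f x u p) + 1). split; [exact Hd|]. intros x' u' p' H1 H2 H3.
  pose proof (H x' u' p' H1 H2 H3). pose proof (Rabs_triang_inv (f x' u' p') (f x u p)). lra.
Qed.

Lemma ex_dpart_plus d f g x u p : ex_dpart d f x u p -> ex_dpart d g x u p ->
  ex_dpart d (fun x u p => f x u p + g x u p) x u p.
Proof. destruct d; intros H1 H2; exact (ex_derive_plus _ _ _ H1 H2). Qed.

Lemma ex_dpart_minus d f g x u p : ex_dpart d f x u p -> ex_dpart d g x u p ->
  ex_dpart d (fun x u p => f x u p - g x u p) x u p.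
Proof. destruct d; intros H1 H2; exact (ex_derive_minus _ _ _ H1 H2). Qed.

Lemma ex_dpart_mult d f g x u p : ex_dpart d f x u p -> ex_dpart d g x u p ->
  ex_dpart d (fun x u p => f x u p * g x u p) x u p.
Proof. destruct d; intros H1 H2; exact (ex_derive_mult _ _ _ H1 H2). Qed.

Lemma ex_dpart_inv d f x u p : ex_dpart d f x u p -> f x u p <> 0 ->
  ex_dpart d (fun x u p => / f x u p) x u p.
Proof. destruct d; intros H1 H2; exact (ex_derive_inv _ _ H1 H2). Qed.

Lemma ex_dpart_const d c x u p : ex_dpart d (fun _ _ _ => c) x u p.
Proof. destruct d; exact (ex_derive_const c _). Qed.

Lemma ex_dpart_coord_p d x u p : ex_dpart d (fun _ _ p => p) x u p.
Proof.
  destruct d; [exact (ex_derive_const p _) | exact (ex_derive_const p _) | exact (ex_derive_id p)].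
Qed.

Lemma dpart_plus d f g x u p : ex_dpart d f x u p -> ex_dpart d g x u p ->
  dpart d (fun x u p => f x u p + g x u p) x u p = dpart d f x u p + dpart d g x u p.
Proof. destruct d; intros H1 H2; exact (Derive_plus _ _ _ H1 H2). Qed.

Lemma dpart_minus d f g x u p : ex_dpart d f x u p -> ex_dpart d g x u p ->
  dpart d (fun x u p => f x u p - g x u p) x u p = dpart d f x u p - dpart d g x u p.
Proof. destruct d; intros H1 H2; exact (Derive_minus _ _ _ H1 H2). Qed.

Lemma dpart_opp d f x u p :
  dpart d (fun x u p => - f x u p) x u p = - dpart d f x u p.
Proof. destruct d; exact (Derive_opp _ _). Qed.

Lemma dpart_mult d f g x u p : ex_dpart d f x u p -> ex_dpart d g x u p ->
  dpart d (fun x u p => f x u p * g x u p) x u p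
  = dpart d f x u p * g x u p + f x u p * dpart d g x u p.
Proof. destruct d; intros H1 H2; exact (Derive_mult _ _ _ H1 H2). Qed.

Lemma dpart_inv d f x u p : ex_dpart d f x u p -> f x u p <> 0 ->
  dpart d (fun x u p => / f x u p) x u p = - dpart d f x u p / f x u p ^ 2.
Proof. destruct d; intros H1 H2; exact (Derive_inv _ _ H1 H2). Qed.

Lemma dpart_const d c x u p : dpart d (fun _ _ _ => c) x u p = 0.
Proof. destruct d; exact (Derive_const c _). Qed.

Lemma dpart_coord_p d x u p :
  dpart d (fun _ _ p => p) x u p = match d with Dp => 1 | _ => 0 end.
Proof.
  destruct d; [exact (Derive_const p _) | exact (Derive_const p _) | exact (Derive_id p)].
Qed.

Section Locality.
Variable U : R -> R -> R -> Prop.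
Hypothesis HU : open3 U.

Local Ltac slice_ball H := destruct (HU _ _ _ H) as [r [Hr Hball]];
  apply (locally_of_ball _ _ r Hr); intros y Hy;
  apply Hball; try rewrite Rminus_diag, Rabs_R0; assumption.

Lemma open3_locally_x x u p : U x u p -> locally x (fun t => U t u p).
Proof. intros H. slice_ball H. Qed.

Lemma open3_locally_u x u p : U x u p -> locally u (fun t => U x t p).
Proof. intros H. slice_ball H. Qed.

Lemma open3_locally_p x u p : U x u p -> locally p (fun t => U x u t).
Proof. intros H. slice_ball H. Qed.

Definition eq_on (f g : fn3) : Prop := forall x u p, U x u p -> f x u p = g x u p.

Local Ltac use_locality E H :=
  eapply filter_imp; [intros t Ht; apply E; exact Ht
                     | first [ apply (open3_locally_x _ _ _ H)
                             | apply (open3_locally_u _ _ _ H)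
                             | apply (open3_locally_p _ _ _ H) ]].

Lemma dpart_eq_on d f g x u p : eq_on f g -> U x u p -> dpart d f x u p = dpart d g x u p.
Proof. intros E H. destruct d; apply Derive_ext_loc; use_locality E H. Qed.

Lemma ex_dpart_eq_on d f g x u p : eq_on f g -> U x u p ->
  ex_dpart d f x u p -> ex_dpart d g x u p.
Proof. intros E H. destruct d; apply ex_derive_ext_loc; use_locality E H. Qed.

Lemma continuous3_at_eq_on f g x u p : eq_on f g -> U x u p ->
  continuous3_at f x u p -> continuous3_at g x u p.
Proof.
  intros E H Hc eps Heps. destruct (Hc eps Heps) as [d [Hd Hd']].
  destruct (HU x u p H) as [r [Hr Hr']].
  exists (Rmin d r). split; [apply Rmin_pos; assumption|].
  intros x' u' p' H1 H2 H3.
  assert (Hm : forall a, Rabs a < Rmin d r -> Rabs a < d /\ Rabs a < r).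
  { intros a Ha. pose proof (Rmin_l d r). pose proof (Rmin_r d r). lra. }
  apply Hm in H1, H2, H3.
  rewrite <- (E x' u' p'), <- (E x u p) by (apply H || apply Hr'; tauto).
  apply Hd'; tauto.
Qed.

End Locality.

(** * Smooth functions *)

Definition pdiff_at (f : fn3) x u p : Prop := forall d, ex_dpart d f x u p.

Definition cont_pdiff_on (U : R -> R -> R -> Prop) (f : fn3) : Prop :=
  forall x u p, U x u p -> continuous3_at f x u p /\ pdiff_at f x u p.

Fixpoint smooth_upto (U : R -> R -> R -> Prop) (n : nat) (f : fn3) : Prop :=
  cont_pdiff_on U f /\
  match n with O => True | S m => forall d, smooth_upto U m (dpart d f) end.

Lemma iter_part_snoc l d f : iter_part (l ++ d :: nil) f = iter_part l (dpart d f).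
Proof. induction l as [|d' l IH]; simpl; congruence. Qed.

Lemma smooth_on_upto U f : smooth_on U f <-> forall n, smooth_upto U n f.
Proof.
  split.
  - intros H n. revert f H. induction n as [|n IH]; intros f H;
      (split; [intros x u p Hp; exact (H nil x u p Hp)|]).
    + exact I.
    + intros d. apply IH. intros l. rewrite <- iter_part_snoc. apply H.
  - intros H l. revert f H. induction l as [|d l IH] using rev_ind; intros f H.
    + exact (proj1 (H O)).
    + rewrite iter_part_snoc. apply IH. intros n. exact (proj2 (H (S n)) d).
Qed.

Lemma smooth_upto_cont_pdiff U n f : smooth_upto U n f -> cont_pdiff_on U f.
Proof. destruct n; intros [H _]; exact H. Qed.

Lemma smooth_upto_pred U n f : smooth_upto U (S n) f -> smooth_upto U n f.
Proof.
  revert f. induction n as [|n IH]; intros f [Hb Hd]; split; try exact Hb.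
  - exact I.
  - intros d. apply IH. apply Hd.
Qed.

Lemma smooth_on_continuous U f l x u p :
  smooth_on U f -> U x u p -> continuous3_at (iter_part l f) x u p.
Proof. intros H Hp. exact (proj1 (H l x u p Hp)). Qed.

Lemma smooth_on_ex_dpart U f l d x u p :
  smooth_on U f -> U x u p -> ex_dpart d (iter_part l f) x u p.
Proof. intros H Hp. exact (proj2 (H l x u p Hp) d). Qed.

Lemma smooth_on_pdiff_at U f x u p : smooth_on U f -> U x u p -> pdiff_at f x u p.
Proof. intros H Hp. exact (proj2 (H nil x u p Hp)). Qed.

Lemma smooth_on_sub (U V : R -> R -> R -> Prop) f :
  (forall x u p, V x u p -> U x u p) -> smooth_on U f -> smooth_on V f.
Proof. intros S H l x u p Hv. apply H, S, Hv. Qed.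

Section SmoothClosure.
Variable U : R -> R -> R -> Prop.
Hypothesis HU : open3 U.

Lemma smooth_upto_eq_on n f g : eq_on U f g -> smooth_upto U n f -> smooth_upto U n g.
Proof.
  revert f g. induction n as [|n IH]; intros f g E [Hb Hd];
    (split; [intros x u p H; destruct (Hb x u p H) as [Hc He]; split;
             [ exact (continuous3_at_eq_on U HU f g x u p E H Hc)
             | intros d; exact (ex_dpart_eq_on U HU d f g x u p E H (He d)) ] |]).
  - exact I.
  - intros d. apply (IH (dpart d f)); [|apply Hd].
    intros x u p H. exact (dpart_eq_on U HU d f g x u p E H).
Qed.

Lemma smooth_on_eq_on f g : eq_on U f g -> smooth_on U f -> smooth_on U g.
Proof.
  intros E. rewrite !smooth_on_upto. intros H n. exact (smooth_upto_eq_on n f g E (H n)).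
Qed.

Lemma smooth_upto_const n c : smooth_upto U n (fun _ _ _ => c).
Proof.
  revert c. induction n as [|n IH]; intros c; (split; [intros x u p _; split;
    [apply continuous3_at_const | intros d; apply ex_dpart_const] |]).
  - exact I.
  - intros d. apply (smooth_upto_eq_on n (fun _ _ _ => 0)); [|apply IH].
    intros x u p _. symmetry. apply (dpart_const d c).
Qed.

Lemma smooth_upto_coord_p n : smooth_upto U n (fun _ _ p => p).
Proof.
  destruct n; (split; [intros x u p _; split;
    [apply continuous3_at_coord_p | intros d; apply ex_dpart_coord_p] |]).
  - exact I.
  - intros d. apply (smooth_upto_eq_on n (fun _ _ _ => match d with Dp => 1 | _ => 0 end));
      [|apply smooth_upto_const].
    intros x u p _. symmetry. apply dpart_coord_p.
Qed.

Local Ltac base_case Hf Hg :=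
  intros x u p H; destruct (smooth_upto_cont_pdiff _ _ _ Hf x u p H) as [Hf1 Hf2];
  destruct (smooth_upto_cont_pdiff _ _ _ Hg x u p H) as [Hg1 Hg2].

Lemma smooth_upto_plus n f g : smooth_upto U n f -> smooth_upto U n g ->
  smooth_upto U n (fun x u p => f x u p + g x u p).
Proof.
  revert f g. induction n as [|n IH]; intros f g Hf Hg;
    (split; [base_case Hf Hg; split;
      [apply continuous3_at_plus | intros d; apply ex_dpart_plus]; auto |]).
  - exact I.
  - intros d. apply (smooth_upto_eq_on n (fun x u p => dpart d f x u p + dpart d g x u p)).
    + base_case Hf Hg. symmetry. apply dpart_plus; auto.
    + apply IH; [apply (proj2 Hf) | apply (proj2 Hg)].
Qed.

Lemma smooth_upto_minus n f g : smooth_upto U n f -> smooth_upto U n g ->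
  smooth_upto U n (fun x u p => f x u p - g x u p).
Proof.
  revert f g. induction n as [|n IH]; intros f g Hf Hg;
    (split; [base_case Hf Hg; split;
      [apply continuous3_at_minus | intros d; apply ex_dpart_minus]; auto |]).
  - exact I.
  - intros d. apply (smooth_upto_eq_on n (fun x u p => dpart d f x u p - dpart d g x u p)).
    + base_case Hf Hg. symmetry. apply dpart_minus; auto.
    + apply IH; [apply (proj2 Hf) | apply (proj2 Hg)].
Qed.

Lemma smooth_upto_mult n f g : smooth_upto U n f -> smooth_upto U n g ->
  smooth_upto U n (fun x u p => f x u p * g x u p).
Proof.
  revert f g. induction n as [|n IH]; intros f g Hf Hg;
    (split; [base_case Hf Hg; split;
      [apply continuous3_at_mult | intros d; apply ex_dpart_mult]; auto |]).
  - exact I.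
  - intros d. apply (smooth_upto_eq_on n
      (fun x u p => dpart d f x u p * g x u p + f x u p * dpart d g x u p)).
    + base_case Hf Hg. symmetry. apply dpart_mult; auto.
    + apply smooth_upto_plus; apply IH;
        solve [apply (proj2 Hf) | apply (proj2 Hg) | apply smooth_upto_pred; assumption].
Qed.

Lemma smooth_upto_inv n f : (forall x u p, U x u p -> f x u p <> 0) ->
  smooth_upto U n f -> smooth_upto U n (fun x u p => / f x u p).
Proof.
  intros Hnz. revert f Hnz. induction n as [|n IH]; intros f Hnz Hf;
    (split; [base_case Hf Hf; split;
      [apply continuous3_at_inv | intros d; apply ex_dpart_inv]; auto |]).
  - exact I.
  - intros d. apply (smooth_upto_eq_on n
      (fun x u p => (-1) * dpart d f x u p * (/ f x u p * / f x u p))).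
    + base_case Hf Hf. rewrite dpart_inv by auto. field. auto.
    + apply smooth_upto_mult; [apply smooth_upto_mult|].
      * apply smooth_upto_const.
      * apply (proj2 Hf).
      * apply smooth_upto_mult; apply IH; auto; apply smooth_upto_pred; exact Hf.
Qed.

Lemma smooth_on_const c : smooth_on U (fun _ _ _ => c).
Proof. apply smooth_on_upto. intros n. apply smooth_upto_const. Qed.

Lemma smooth_on_coord_p : smooth_on U (fun _ _ p => p).
Proof. apply smooth_on_upto. intros n. apply smooth_upto_coord_p. Qed.

Lemma smooth_on_minus f g : smooth_on U f -> smooth_on U g ->
  smooth_on U (fun x u p => f x u p - g x u p).
Proof. rewrite !smooth_on_upto. intros Hf Hg n. apply smooth_upto_minus; auto. Qed.

Lemma smooth_on_mult f g : smooth_on U f -> smooth_on U g ->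
  smooth_on U (fun x u p => f x u p * g x u p).
Proof. rewrite !smooth_on_upto. intros Hf Hg n. apply smooth_upto_mult; auto. Qed.

Lemma smooth_on_inv f : (forall x u p, U x u p -> f x u p <> 0) ->
  smooth_on U f -> smooth_on U (fun x u p => / f x u p).
Proof. rewrite !smooth_on_upto. intros Hnz Hf n. apply smooth_upto_inv; auto. Qed.

End SmoothClosure.

(** * The Poincare lemma on a box *)

Definition box (x0 u0 p0 r : R) (x u p : R) : Prop :=
  Rabs (x - x0) < r /\ Rabs (u - u0) < r /\ Rabs (p - p0) < r.

Lemma Rabs_lt_shift z0 z z' r : Rabs (z' - z) < r - Rabs (z - z0) -> Rabs (z' - z0) < r.
Proof.
  intros H. pose proof (Rabs_triang (z' - z) (z - z0)).
  replace (z' - z + (z - z0)) with (z' - z0) in * by ring. lra.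
Qed.

Lemma box_open x0 u0 p0 r : open3 (box x0 u0 p0 r).
Proof.
  intros x u p (H1 & H2 & H3).
  set (m := Rmin (r - Rabs (x - x0)) (Rmin (r - Rabs (u - u0)) (r - Rabs (p - p0)))).
  assert (Hm : m <= r - Rabs (x - x0) /\ m <= r - Rabs (u - u0) /\ m <= r - Rabs (p - p0)).
  { pose proof (Rmin_l (r - Rabs (u - u0)) (r - Rabs (p - p0))).
    pose proof (Rmin_r (r - Rabs (u - u0)) (r - Rabs (p - p0))).
    pose proof (Rmin_l (r - Rabs (x - x0)) (Rmin (r - Rabs (u - u0)) (r - Rabs (p - p0)))).
    pose proof (Rmin_r (r - Rabs (x - x0)) (Rmin (r - Rabs (u - u0)) (r - Rabs (p - p0)))).
    unfold m. lra. }
  exists m. split; [unfold m; repeat apply Rmin_pos; lra|].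
  intros x' u' p' E1 E2 E3. split; [|split];
    [apply (Rabs_lt_shift x0 x) | apply (Rabs_lt_shift u0 u) | apply (Rabs_lt_shift p0 p)]; lra.
Qed.

Lemma box_center x0 u0 p0 r : 0 < r -> box x0 u0 p0 r x0 u0 p0.
Proof. intros Hr. unfold box. rewrite !Rminus_diag, Rabs_R0. auto. Qed.

Lemma between_ball z0 z w r :
  Rabs (z - z0) < r -> Rmin z0 z <= w <= Rmax z0 z -> Rabs (w - z0) < r.
Proof.
  unfold Rmin, Rmax. intros H Hw.
  destruct Rle_dec; unfold Rabs in *; repeat destruct Rcase_abs; lra.
Qed.

Lemma ball_locally z0 z r : Rabs (z - z0) < r -> locally z (fun t => Rabs (t - z0) < r).
Proof.
  intros H. apply (locally_of_ball _ _ (r - Rabs (z - z0))); [lra|].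
  intros y Hy. exact (Rabs_lt_shift z0 z y r Hy).
Qed.

Lemma bounded_variation3 (F a b c : fn3) x u p d K :
  (forall x' u' p', Rabs (x' - x) <= d -> Rabs (u' - u) <= d -> Rabs (p' - p) <= d ->
     is_derive (fun t => F t u' p') x' (a x' u' p') /\
     is_derive (fun t => F x' t p') u' (b x' u' p') /\
     is_derive (fun t => F x' u' t) p' (c x' u' p') /\
     Rabs (a x' u' p') <= K /\ Rabs (b x' u' p') <= K /\ Rabs (c x' u' p') <= K) ->
  forall x' u' p', Rabs (x' - x) <= d -> Rabs (u' - u) <= d -> Rabs (p' - p) <= d ->
    Rabs (F x' u' p' - F x u p)
    <= K * Rabs (x' - x) + K * Rabs (u' - u) + K * Rabs (p' - p).
Proof.
  intros H x' u' p' E1 E2 E3.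
  assert (Hx : Rabs (F x' u p - F x u p) <= K * Rabs (x' - x)).
  { apply (bounded_variation (fun t => F t u p) (fun t => a t u p)). intros t Ht.
    assert (Z : Rabs (u - u) <= d /\ Rabs (p - p) <= d)
      by (rewrite !Rminus_diag, !Rabs_R0; pose proof (Rabs_pos (x' - x)); lra).
    destruct (H t u p) as (Dt & _ & _ & Kt & _); [lra | tauto | tauto | auto]. }
  assert (Hu : Rabs (F x' u' p - F x' u p) <= K * Rabs (u' - u)).
  { apply (bounded_variation (fun t => F x' t p) (fun t => b x' t p)). intros t Ht.
    assert (Z : Rabs (p - p) <= d)
      by (rewrite !Rminus_diag, !Rabs_R0; pose proof (Rabs_pos (x' - x)); lra).
    destruct (H x' t p) as (_ & Dt & _ & _ & Kt & _); [lra | lra | tauto | auto]. }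
  assert (Hp : Rabs (F x' u' p' - F x' u' p) <= K * Rabs (p' - p)).
  { apply (bounded_variation (fun t => F x' u' t) (fun t => c x' u' t)). intros t Ht.
    destruct (H x' u' t) as (_ & _ & Dt & _ & _ & Kt); [lra | lra | lra | auto]. }
  pose proof (Rabs_triang (F x' u' p' - F x' u' p) (F x' u' p - F x' u p)).
  pose proof (Rabs_triang (F x' u' p' - F x' u' p + (F x' u' p - F x' u p)) (F x' u p - F x u p)).
  replace (F x' u' p' - F x' u' p + (F x' u' p - F x' u p) + (F x' u p - F x u p))
    with (F x' u' p' - F x u p) in * by ring.
  lra.
Qed.

Lemma continuous3_at_of_partials (F a b c : fn3) x u p m :
  0 < m ->
  (forall x' u' p', Rabs (x' - x) < m -> Rabs (u' - u) < m -> Rabs (p' - p) < m ->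
     is_derive (fun t => F t u' p') x' (a x' u' p') /\
     is_derive (fun t => F x' t p') u' (b x' u' p') /\
     is_derive (fun t => F x' u' t) p' (c x' u' p')) ->
  continuous3_at a x u p -> continuous3_at b x u p -> continuous3_at c x u p ->
  continuous3_at F x u p.
Proof.
  intros Hm HD Ha Hb Hc.
  destruct (continuous3_at_locally_bounded a x u p Ha) as (da & Ka & Hda & Ba).
  destruct (continuous3_at_locally_bounded b x u p Hb) as (db & Kb & Hdb & Bb).
  destruct (continuous3_at_locally_bounded c x u p Hc) as (dc & Kc & Hdc & Bc).
  set (K := Rabs Ka + Rabs Kb + Rabs Kc + 1).
  set (d := Rmin (Rmin m da) (Rmin db dc) / 2).
  assert (HK : 0 < K /\ Ka <= K /\ Kb <= K /\ Kc <= K).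
  { pose proof (Rle_abs Ka). pose proof (Rle_abs Kb). pose proof (Rle_abs Kc).
    pose proof (Rabs_pos Ka). pose proof (Rabs_pos Kb). pose proof (Rabs_pos Kc).
    unfold K. lra. }
  assert (Hd : 0 < d /\ forall t, Rabs t <= d ->
            Rabs t < m /\ Rabs t < da /\ Rabs t < db /\ Rabs t < dc).
  { pose proof (Rmin_l (Rmin m da) (Rmin db dc)). pose proof (Rmin_r (Rmin m da) (Rmin db dc)).
    pose proof (Rmin_l m da). pose proof (Rmin_r m da).
    pose proof (Rmin_l db dc). pose proof (Rmin_r db dc).
    pose proof (Rmin_pos _ _ (Rmin_pos _ _ Hm Hda) (Rmin_pos _ _ Hdb Hdc)).
    unfold d. split; [lra|]. intros t Ht. lra. }
  destruct Hd as [Hd Hsmall].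
  assert (Lip := bounded_variation3 F a b c x u p d K).
  intros eps Heps.
  exists (Rmin d (eps / (3 * K))). split.
  { apply Rmin_pos; [exact Hd|]. apply Rdiv_lt_0_compat; lra. }
  intros x' u' p' E1 E2 E3.
  pose proof (Rmin_l d (eps / (3 * K))). pose proof (Rmin_r d (eps / (3 * K))).
  eapply Rle_lt_trans.
  - apply Lip; [|lra|lra|lra]. intros x1 u1 p1 F1 F2 F3.
    apply Hsmall in F1, F2, F3.
    destruct (HD x1 u1 p1) as (D1 & D2 & D3); try tauto.
    refine (conj D1 (conj D2 (conj D3 _))).
    split; [|split]; eapply Rle_trans;
      solve [apply Ba; tauto | apply Bb; tauto | apply Bc; tauto | lra].
  - assert (K <> 0) by lra.
    replace eps with (K * (eps / (3 * K)) * 3) by (field; assumption).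
    assert (Small : forall t, Rabs t < Rmin d (eps / (3 * K)) ->
                      K * Rabs t < K * (eps / (3 * K)))
      by (intros t Ht; apply Rmult_lt_compat_l; lra).
    pose proof (Small _ E1). pose proof (Small _ E2). pose proof (Small _ E3).
    lra.
Qed.

Definition potential (a b c : fn3) (x0 u0 p0 : R) : fn3 := fun x u p =>
  RInt (fun t => a t u0 p0) x0 x + RInt (fun s => b x s p0) u0 u + RInt (fun w => c x u w) p0 p.

Section Poincare.
Variables (a b c : fn3) (x0 u0 p0 r : R).
Let B := box x0 u0 p0 r.
Hypotheses (Ha : smooth_on B a) (Hb : smooth_on B b) (Hc : smooth_on B c).
Hypotheses (Hcu : forall x u p, B x u p -> d_u c x u p = d_p b x u p)
           (Hcx : forall x u p, B x u p -> d_x c x u p = d_p a x u p)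
           (Hbx : forall x u p, B x u p -> d_x b x u p = d_u a x u p).
Let P := potential a b c x0 u0 p0.

Local Ltac in_box :=
  unfold B, box; repeat split;
  match goal with
  | H : Rabs (?z - ?z0) < r |- Rabs (?z0 - ?z0) < r =>
      rewrite Rminus_diag, Rabs_R0; exact (Rle_lt_trans _ _ _ (Rabs_pos _) H)
  | H : Rmin ?z0 ?z <= ?w <= Rmax ?z0 ?z |- Rabs (?w - ?z0) < r =>
      apply (between_ball z0 z w r); [assumption | exact H]
  | H : Rmin ?z0 ?z < ?w < Rmax ?z0 ?z |- Rabs (?w - ?z0) < r =>
      apply (between_ball z0 z w r); [assumption | lra]
  | _ => assumption
  end.

Lemma ex_RInt_slice_x f x : smooth_on B f -> B x u0 p0 -> ex_RInt (fun t => f t u0 p0) x0 x.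
Proof.
  intros Hf (H1 & H2 & H3). apply (@ex_RInt_continuous R_CompleteNormedModule).
  intros t Ht. apply (continuous3_at_slice_x (iter_part nil f)).
  apply (smooth_on_continuous B); [exact Hf | in_box].
Qed.

Lemma ex_RInt_slice_u f x u : smooth_on B f -> B x u p0 -> ex_RInt (fun s => f x s p0) u0 u.
Proof.
  intros Hf (H1 & H2 & H3). apply (@ex_RInt_continuous R_CompleteNormedModule).
  intros s Hs. apply (continuous3_at_slice_u (iter_part nil f)).
  apply (smooth_on_continuous B); [exact Hf | in_box].
Qed.

Lemma ex_RInt_slice_p f x u p : smooth_on B f -> B x u p -> ex_RInt (fun w => f x u w) p0 p.
Proof.
  intros Hf (H1 & H2 & H3). apply (@ex_RInt_continuous R_CompleteNormedModule).
  intros w Hw. apply (continuous3_at_slice_p (iter_part nil f)).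
  apply (smooth_on_continuous B); [exact Hf | in_box].
Qed.

Lemma RInt_d_u f x u : smooth_on B f -> B x u p0 ->
  RInt (fun s => d_u f x s p0) u0 u = f x u p0 - f x u0 p0.
Proof.
  intros Hf (H1 & H2 & H3). apply (RInt_Derive (fun s => f x s p0)); intros s Hs.
  - apply (smooth_on_ex_dpart B f nil Du); [exact Hf | in_box].
  - apply (continuous3_at_slice_u (iter_part (Du :: nil) f)).
    apply (smooth_on_continuous B); [exact Hf | in_box].
Qed.

Lemma RInt_d_p f x u p : smooth_on B f -> B x u p ->
  RInt (fun w => d_p f x u w) p0 p = f x u p - f x u p0.
Proof.
  intros Hf (H1 & H2 & H3). apply (RInt_Derive (fun w => f x u w)); intros w Hw.
  - apply (smooth_on_ex_dpart B f nil Dp); [exact Hf | in_box].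
  - apply (continuous3_at_slice_p (iter_part (Dp :: nil) f)).
    apply (smooth_on_continuous B); [exact Hf | in_box].
Qed.

Lemma potential_is_derive_p x u p : B x u p -> is_derive (fun t => P x u t) p (c x u p).
Proof.
  intros (H1 & H2 & H3). rewrite <- (Rplus_0_l (c x u p)).
  apply (is_derive_plus (fun _ => _) (fun t => RInt (fun w => c x u w) p0 t)).
  - exact (@is_derive_const R_AbsRing R_NormedModule _ _).
  - apply (is_derive_RInt (fun w => c x u w) _ p0).
    + eapply filter_imp; [|exact (ball_locally p0 p r H3)]. intros t Ht.
      apply (@RInt_correct R_CompleteNormedModule). apply ex_RInt_slice_p; [exact Hc | in_box].
    + apply (continuous3_at_slice_p (iter_part nil c)).
      apply (smooth_on_continuous B); [exact Hc | in_box].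
Qed.

Lemma potential_is_derive_u x u p : B x u p -> is_derive (fun t => P x t p) u (b x u p).
Proof.
  intros (H1 & H2 & H3).
  replace (b x u p) with (0 + b x u p0 + RInt (fun w => d_u c x u w) p0 p).
  - apply (is_derive_plus (fun t => _ + _) (fun t => RInt (fun w => c x t w) p0 p)).
    + apply (is_derive_plus (fun _ => _) (fun t => RInt (fun s => b x s p0) u0 t)).
      * exact (@is_derive_const R_AbsRing R_NormedModule _ _).
      * apply (is_derive_RInt (fun s => b x s p0) _ u0).
        -- eapply filter_imp; [|exact (ball_locally u0 u r H2)]. intros t Ht.
           apply (@RInt_correct R_CompleteNormedModule). apply ex_RInt_slice_u; [exact Hb | in_box].
        -- apply (continuous3_at_slice_u (iter_part nil b)).
           apply (smooth_on_continuous B); [exact Hb | in_box].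
    + apply (is_derive_RInt_param (fun t w => c x t w)).
      * eapply filter_imp; [|exact (ball_locally u0 u r H2)]. intros t Ht w Hw.
        apply (smooth_on_ex_dpart B c nil Du); [exact Hc | in_box].
      * intros w Hw. apply (continuous3_at_slice_up (iter_part (Du :: nil) c)).
        apply (smooth_on_continuous B); [exact Hc | in_box].
      * eapply filter_imp; [|exact (ball_locally u0 u r H2)]. intros t Ht.
        apply ex_RInt_slice_p; [exact Hc | in_box].
  - rewrite (RInt_ext _ (fun w => d_p b x u w)).
    + rewrite RInt_d_p; [ring | exact Hb | in_box].
    + intros w Hw. apply Hcu. in_box.
Qed.

Lemma potential_is_derive_x x u p : B x u p -> is_derive (fun t => P t u p) x (a x u p).
Proof.
  intros (H1 & H2 & H3).
  replace (a x u p) with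
    (a x u0 p0 + RInt (fun s => d_x b x s p0) u0 u + RInt (fun w => d_x c x u w) p0 p).
  - apply (is_derive_plus (fun t => _ + _) (fun t => RInt (fun w => c t u w) p0 p)).
    + apply (is_derive_plus (fun t => RInt (fun t => a t u0 p0) x0 t)
                            (fun t => RInt (fun s => b t s p0) u0 u)).
      * apply (is_derive_RInt (fun t => a t u0 p0) _ x0).
        -- eapply filter_imp; [|exact (ball_locally x0 x r H1)]. intros t Ht.
           apply (@RInt_correct R_CompleteNormedModule). apply ex_RInt_slice_x; [exact Ha | in_box].
        -- apply (continuous3_at_slice_x (iter_part nil a)).
           apply (smooth_on_continuous B); [exact Ha | in_box].
      * apply (is_derive_RInt_param (fun t s => b t s p0)).
        -- eapply filter_imp; [|exact (ball_locally x0 x r H1)]. intros t Ht s Hs.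
           apply (smooth_on_ex_dpart B b nil Defs.Dx); [exact Hb | in_box].
        -- intros s Hs. apply (continuous3_at_slice_xu (iter_part (Defs.Dx :: nil) b)).
           apply (smooth_on_continuous B); [exact Hb | in_box].
        -- eapply filter_imp; [|exact (ball_locally x0 x r H1)]. intros t Ht.
           apply ex_RInt_slice_u; [exact Hb | in_box].
    + apply (is_derive_RInt_param (fun t w => c t u w)).
      * eapply filter_imp; [|exact (ball_locally x0 x r H1)]. intros t Ht w Hw.
        apply (smooth_on_ex_dpart B c nil Defs.Dx); [exact Hc | in_box].
      * intros w Hw. apply (continuous3_at_slice_xp (iter_part (Defs.Dx :: nil) c)).
        apply (smooth_on_continuous B); [exact Hc | in_box].
      * eapply filter_imp; [|exact (ball_locally x0 x r H1)]. intros t Ht.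
        apply ex_RInt_slice_p; [exact Hc | in_box].
  - rewrite (RInt_ext (fun w => d_x c x u w) (fun w => d_p a x u w)),
            (RInt_ext (fun s => d_x b x s p0) (fun s => d_u a x s p0)).
    + rewrite RInt_d_p, RInt_d_u; [ring | exact Ha | in_box | exact Ha | in_box].
    + intros s Hs. apply Hbx. in_box.
    + intros w Hw. apply Hcx. in_box.
Qed.

Lemma potential_smooth : smooth_on B P.
Proof.
  assert (D : forall x u p, B x u p ->
    is_derive (fun t => P t u p) x (a x u p) /\ is_derive (fun t => P x t p) u (b x u p) /\
    is_derive (fun t => P x u t) p (c x u p)).
  { intros x u p H. split; [|split].
    - exact (potential_is_derive_x x u p H).
    - exact (potential_is_derive_u x u p H).
    - exact (potential_is_derive_p x u p H). }
  assert (Base : cont_pdiff_on B P).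
  { intros x u p H. destruct (D x u p H) as (Dx1 & Du1 & Dp1). split.
    - destruct (box_open x0 u0 p0 r x u p H) as (m & Hm & Hball).
      apply (continuous3_at_of_partials P a b c x u p m Hm).
      + intros x' u' p' E1 E2 E3. apply D, Hball; assumption.
      + exact (smooth_on_continuous B a nil x u p Ha H).
      + exact (smooth_on_continuous B b nil x u p Hb H).
      + exact (smooth_on_continuous B c nil x u p Hc H).
    - intros [| |]; eexists; eassumption. }
  apply smooth_on_upto. intros [|n]; split; try exact Base; [exact I|].
  intros [| |]; [apply (smooth_upto_eq_on B (box_open x0 u0 p0 r) n a) |
                 apply (smooth_upto_eq_on B (box_open x0 u0 p0 r) n b) |
                 apply (smooth_upto_eq_on B (box_open x0 u0 p0 r) n c)];
    solve [ intros x u p H; symmetry; apply is_derive_unique, D, H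
          | apply smooth_on_upto; assumption ].
Qed.

Lemma potential_partials x u p : B x u p ->
  d_x P x u p = a x u p /\ d_u P x u p = b x u p /\ d_p P x u p = c x u p.
Proof.
  intros H. split; [|split]; apply is_derive_unique.
  - exact (potential_is_derive_x x u p H).
  - exact (potential_is_derive_u x u p H).
  - exact (potential_is_derive_p x u p H).
Qed.

End Poincare.

Definition local_potentials (U : R -> R -> R -> Prop) (a b c : fn3) : Prop :=
  forall x u p, U x u p -> exists (V : R -> R -> R -> Prop) (I : fn3),
    open_nbhd_in U V x u p /\ smooth_on V I /\
    forall x' u' p', V x' u' p' ->
      d_x I x' u' p' = a x' u' p' /\ d_u I x' u' p' = b x' u' p' /\
      d_p I x' u' p' = c x' u' p'.

Lemma poincare_lemma U a b c : open3 U ->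
  smooth_on U a -> smooth_on U b -> smooth_on U c ->
  (forall x u p, U x u p -> d_u c x u p = d_p b x u p) ->
  (forall x u p, U x u p -> d_x c x u p = d_p a x u p) ->
  (forall x u p, U x u p -> d_x b x u p = d_u a x u p) ->
  local_potentials U a b c.
Proof.
  intros HU Ha Hb Hc Hcu Hcx Hbx x u p H.
  destruct (HU x u p H) as (r & Hr & Hball).
  assert (Sub : forall x' u' p', box x u p r x' u' p' -> U x' u' p')
    by (intros x' u' p' (E1 & E2 & E3); apply Hball; assumption).
  assert (Ha' := smooth_on_sub U _ a Sub Ha).
  assert (Hb' := smooth_on_sub U _ b Sub Hb).
  assert (Hc' := smooth_on_sub U _ c Sub Hc).
  assert (Hcu' : forall x' u' p', box x u p r x' u' p' -> d_u c x' u' p' = d_p b x' u' p')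
    by (intros x' u' p' H'; apply Hcu, Sub, H').
  assert (Hcx' : forall x' u' p', box x u p r x' u' p' -> d_x c x' u' p' = d_p a x' u' p')
    by (intros x' u' p' H'; apply Hcx, Sub, H').
  assert (Hbx' : forall x' u' p', box x u p r x' u' p' -> d_x b x' u' p' = d_u a x' u' p')
    by (intros x' u' p' H'; apply Hbx, Sub, H').
  exists (box x u p r), (potential a b c x u p). split; [|split].
  - split; [apply box_open | split; [apply box_center, Hr | exact Sub]].
  - exact (potential_smooth a b c x u p r Ha' Hb' Hc' Hcu' Hcx' Hbx').
  - exact (potential_partials a b c x u p r Ha' Hb' Hc' Hcu' Hcx' Hbx').
Qed.

Lemma vapp_dpart V f x u p : vapp V f x u p
  = vx V x u p * dpart Defs.Dx f x u p + vu V x u p * dpart Du f x u p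
    + vp V x u p * dpart Dp f x u p.
Proof. reflexivity. Qed.

Lemma vapp_plus V f g x u p : pdiff_at f x u p -> pdiff_at g x u p ->
  vapp V (fun x u p => f x u p + g x u p) x u p = vapp V f x u p + vapp V g x u p.
Proof. intros Hf Hg. rewrite !vapp_dpart, !dpart_plus by auto. ring. Qed.

Lemma vapp_minus V f g x u p : pdiff_at f x u p -> pdiff_at g x u p ->
  vapp V (fun x u p => f x u p - g x u p) x u p = vapp V f x u p - vapp V g x u p.
Proof. intros Hf Hg. rewrite !vapp_dpart, !dpart_minus by auto. ring. Qed.

Lemma vapp_opp V f x u p :
  vapp V (fun x u p => - f x u p) x u p = - vapp V f x u p.
Proof. rewrite !vapp_dpart, !dpart_opp. ring. Qed.

Lemma vapp_mult V f g x u p : pdiff_at f x u p -> pdiff_at g x u p ->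
  vapp V (fun x u p => f x u p * g x u p) x u p
  = vapp V f x u p * g x u p + f x u p * vapp V g x u p.
Proof. intros Hf Hg. rewrite !vapp_dpart, !dpart_mult by auto. ring. Qed.

Lemma vapp_inv V f x u p : pdiff_at f x u p -> f x u p <> 0 ->
  vapp V (fun x u p => / f x u p) x u p = - vapp V f x u p / f x u p ^ 2.
Proof. intros Hf Hnz. rewrite !vapp_dpart, !dpart_inv by auto. field. exact Hnz. Qed.

Lemma vapp_const V c x u p : vapp V (fun _ _ _ => c) x u p = 0.
Proof. rewrite vapp_dpart, !dpart_const. ring. Qed.

Lemma vapp_coord_p V x u p : vapp V (fun _ _ p => p) x u p = vp V x u p.
Proof. rewrite vapp_dpart, !dpart_coord_p. ring. Qed.

Lemma vapp_eq_on U V f g x u p : open3 U -> eq_on U f g -> U x u p ->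
  vapp V f x u p = vapp V g x u p.
Proof. intros HU E H. rewrite !vapp_dpart, !(dpart_eq_on U HU _ f g x u p E H). reflexivity. Qed.

Lemma d_x_vapp f x u p : d_x f x u p = vapp (VF one3 zero3 zero3) f x u p.
Proof. unfold vapp, one3, zero3. simpl. ring. Qed.

Lemma d_u_vapp f x u p : d_u f x u p = vapp (VF zero3 one3 zero3) f x u p.
Proof. unfold vapp, one3, zero3. simpl. ring. Qed.

Lemma d_p_vapp f x u p : d_p f x u p = vapp (VF zero3 zero3 one3) f x u p.
Proof. unfold vapp, one3, zero3. simpl. ring. Qed.

Lemma pdiff_at_minus f g x u p : pdiff_at f x u p -> pdiff_at g x u p ->
  pdiff_at (fun x u p => f x u p - g x u p) x u p.
Proof. intros Hf Hg d. apply ex_dpart_minus; auto. Qed.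

Lemma pdiff_at_mult f g x u p : pdiff_at f x u p -> pdiff_at g x u p ->
  pdiff_at (fun x u p => f x u p * g x u p) x u p.
Proof. intros Hf Hg d. apply ex_dpart_mult; auto. Qed.

Lemma pdiff_at_const c x u p : pdiff_at (fun _ _ _ => c) x u p.
Proof. intros d. apply ex_dpart_const. Qed.

Lemma pdiff_at_coord_p x u p : pdiff_at (fun _ _ p => p) x u p.
Proof. intros d. apply ex_dpart_coord_p. Qed.

Ltac solve_pdiff := repeat match goal with
  | H : pdiff_at ?f ?x ?u ?p |- pdiff_at ?f ?x ?u ?p => exact H
  | |- pdiff_at (fun x u p => _ - _) _ _ _ => apply pdiff_at_minus
  | |- pdiff_at (fun x u p => _ * _) _ _ _ => apply pdiff_at_mult
  | |- pdiff_at (fun _ _ p => p) _ _ _ => apply pdiff_at_coord_p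
  | |- pdiff_at (fun _ _ _ => _) _ _ _ => apply pdiff_at_const
  end.

(** * The determining equation of a canonical representative *)

Definition lambda_determining (U : R -> R -> R -> Prop) (phi lam : fn3) : Prop :=
  forall x u p, U x u p ->
    vapp (Afield phi) lam x u p = d_u phi x u p + lam x u p * d_p phi x u p - lam x u p ^ 2.

Section DeterminingEquation.
Variables (U : R -> R -> R -> Prop) (phi xi eta l0 lam : fn3).
Hypotheses (HU : open3 U) (Hphi : smooth_on U phi) (Hsym : gen_sym U phi xi eta l0)
  (HQ : forall x u p, U x u p -> eta x u p - xi x u p * p <> 0)
  (Hcanon : forall x u p, U x u p -> lam x u p = canon_lambda phi xi eta l0 x u p)
  (Hlam : smooth_on U lam).

Let A := Afield phi.
Let Q : fn3 := fun x u p => eta x u p - xi x u p * p.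

Lemma characteristic_A_derivative x u p : U x u p ->
  vapp A Q x u p = (lam x u p - l0 x u p) * Q x u p.
Proof.
  intros H. rewrite (Hcanon x u p H). unfold canon_lambda, A, Q. field. exact (HQ x u p H).
Qed.

Lemma prolongation_p_component x u p : U x u p ->
  vp (prol phi xi eta l0) x u p = lam x u p * Q x u p + xi x u p * phi x u p.
Proof.
  destruct Hsym as (Hxi & Heta & _).
  intros H. rewrite (Hcanon x u p H). unfold canon_lambda, prol, Aplus. cbn [vp]. fold A.
  change (fun x u p => eta x u p - xi x u p * p) with Q.
  assert (AQ : vapp A Q x u p = vapp A eta x u p - (vapp A xi x u p * p + xi x u p * phi x u p)).
  { assert (Pxi := smooth_on_pdiff_at U xi x u p Hxi H).
    assert (Peta := smooth_on_pdiff_at U eta x u p Heta H).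
    unfold Q. rewrite (vapp_minus A eta (fun x u p => xi x u p * p)) by solve_pdiff.
    rewrite (vapp_mult A xi (fun _ _ p => p)), vapp_coord_p by solve_pdiff. reflexivity. }
  rewrite AQ. unfold Q. field. exact (HQ x u p H).
Qed.

Lemma canonical_lambda_determining : lambda_determining U phi lam.
Proof.
  intros x u p H.
  destruct Hsym as (Hxi & Heta & Hl0 & Hbracket).
  pose proof (proj2 (proj2 (Hbracket x u p H))) as E. cbn [lie vp vx vu] in E.
  change (vp (Afield phi)) with phi in E. fold A in E.
  assert (Pxi := smooth_on_pdiff_at U xi x u p Hxi H).
  assert (Peta := smooth_on_pdiff_at U eta x u p Heta H).
  assert (Pphi := smooth_on_pdiff_at U phi x u p Hphi H).
  assert (Plam := smooth_on_pdiff_at U lam x u p Hlam H).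
  rewrite (vapp_eq_on U A (vp (prol phi xi eta l0))
             (fun x u p => lam x u p * Q x u p + xi x u p * phi x u p) x u p HU
             prolongation_p_component H) in E.
  rewrite (vapp_plus A (fun x u p => lam x u p * Q x u p) (fun x u p => xi x u p * phi x u p)),
    (vapp_mult A lam Q), (vapp_mult A xi phi), characteristic_A_derivative in E
    by (auto; unfold Q; solve_pdiff).
  assert (Vphi : vapp (prol phi xi eta l0) phi x u p = xi x u p * d_x phi x u p
            + eta x u p * d_u phi x u p + vp (prol phi xi eta l0) x u p * d_p phi x u p)
    by reflexivity.
  assert (Aphi : vapp A phi x u p
                 = d_x phi x u p + p * d_u phi x u p + phi x u p * d_p phi x u p)
    by (unfold vapp, A, Afield; cbn [vx vu vp]; ring).
  rewrite Vphi, Aphi, prolongation_p_component in E by exact H.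
  unfold Aplus in E. cbn [vp Afield] in E. unfold A in *.
  apply (Rmult_eq_reg_l (Q x u p)); [|exact (HQ x u p H)].
  unfold Q in *. lra.
Qed.

End DeterminingEquation.

(** * Integrating factors and the last multiplier *)

Section ClosedForm.
Variables (U : R -> R -> R -> Prop) (phi lam mu : fn3).
Hypotheses (Hphi : smooth_on U phi) (Hlam : smooth_on U lam) (Hmu : smooth_on U mu)
  (Hdet : lambda_determining U phi lam)
  (HXmu : forall x u p, U x u p -> vapp (Xf lam) mu x u p = - d_p lam x u p * mu x u p)
  (HAmu : forall x u p, U x u p ->
            vapp (Afield phi) mu x u p = (lam x u p - d_p phi x u p) * mu x u p).

Let a : fn3 := fun x u p => mu x u p * (lam x u p * p - phi x u p).
Let b : fn3 := fun x u p => - (lam x u p * mu x u p).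

Lemma symmetry_form_closed x u p : U x u p ->
  d_u mu x u p = d_p b x u p /\ d_x mu x u p = d_p a x u p /\ d_x b x u p = d_u a x u p.
Proof.
  intros H.
  assert (Pphi := smooth_on_pdiff_at U phi x u p Hphi H).
  assert (Plam := smooth_on_pdiff_at U lam x u p Hlam H).
  assert (Pmu := smooth_on_pdiff_at U mu x u p Hmu H).
  assert (Eb : forall V, vapp V b x u p
                 = - (vapp V lam x u p * mu x u p + lam x u p * vapp V mu x u p)).
  { intros V. unfold b. rewrite vapp_opp, (vapp_mult V lam mu) by assumption. reflexivity. }
  assert (Ea : forall V, vapp V a x u p
                 = vapp V mu x u p * (lam x u p * p - phi x u p)
                   + mu x u p * (vapp V lam x u p * p + lam x u p * vp V x u p
                                 - vapp V phi x u p)).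
  { intros V. unfold a.
    rewrite (vapp_mult V mu (fun x u p => lam x u p * p - phi x u p)) by solve_pdiff.
    rewrite (vapp_minus V (fun x u p => lam x u p * p) phi) by solve_pdiff.
    rewrite (vapp_mult V lam (fun _ _ p => p)), vapp_coord_p by solve_pdiff.
    reflexivity. }
  rewrite !d_u_vapp, !d_p_vapp, !d_x_vapp, !Ea, !Eb.
  pose proof (Hdet x u p H) as Dlam. pose proof (HXmu x u p H) as Xmu.
  pose proof (HAmu x u p H) as Amu.
  unfold vapp, Xf, Afield, one3, zero3 in *. cbn [vx vu vp] in *.
  set (Mx := d_x mu x u p) in *. set (Mu := d_u mu x u p) in *. set (Mp := d_p mu x u p) in *.
  set (Lx := d_x lam x u p) in *. set (Lu := d_u lam x u p) in *.
  set (Lp := d_p lam x u p) in *.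
  set (Fx := d_x phi x u p) in *. set (Fu := d_u phi x u p) in *.
  set (Fp := d_p phi x u p) in *.
  set (M := mu x u p) in *. set (L := lam x u p) in *. set (F := phi x u p) in *.
  clearbody Mx Mu Mp Lx Lu Lp Fx Fu Fp M L F.
  (* The hypotheses determine mu_u, mu_x and lam_x; after substituting them the three
     closedness conditions are polynomial identities. *)
  assert (EMu : Mu = - Lp * M - L * Mp) by lra.
  assert (EMx : Mx = (L - Fp) * M - p * Mu - F * Mp) by lra.
  assert (ELx : Lx = Fu + L * Fp - L ^ 2 - p * Lu - F * Lp) by lra.
  subst Mx Mu Lx.
  repeat split; ring.
Qed.

End ClosedForm.

Definition rho (lA lB : fn3) : fn3 := fun x u p =>
  (vapp (Xf lA) lB x u p - vapp (Xf lB) lA x u p) / (lA x u p - lB x u p).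

Lemma rho_sym lA lB x u p : lA x u p - lB x u p <> 0 -> rho lA lB x u p = rho lB lA x u p.
Proof.
  intros Hne. assert (lB x u p - lA x u p <> 0) by (intros E; apply Hne; lra).
  unfold rho. field. split; assumption.
Qed.

Lemma Xf_shift lA lB f x u p :
  vapp (Xf lB) f x u p = vapp (Xf lA) f x u p + (lB x u p - lA x u p) * d_p f x u p.
Proof. unfold vapp, Xf. cbn [vx vu vp]. ring. Qed.

Section Weight.
Variables (U : R -> R -> R -> Prop) (phi lA lB f g : fn3).
Hypotheses (HU : open3 U) (Hphi : smooth_on U phi)
  (HlA : smooth_on U lA) (HlB : smooth_on U lB) (Hf : smooth_on U f) (Hg : smooth_on U g)
  (Hne : forall x u p, U x u p -> lA x u p - lB x u p <> 0)
  (Hfnz : forall x u p, U x u p -> f x u p <> 0)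
  (Hgnz : forall x u p, U x u p -> g x u p <> 0)
  (HdetA : lambda_determining U phi lA) (HdetB : lambda_determining U phi lB)
  (HAg : forall x u p, U x u p ->
     vapp (Afield phi) g x u p = (lB x u p - vapp (Afield phi) f x u p / f x u p) * g x u p)
  (HXg : forall x u p, U x u p -> vapp (Xf lA) g x u p = 0)
  (Hrho : forall x u p, U x u p -> vapp (Xf lA) f x u p / f x u p = rho lA lB x u p).

Let h : fn3 := fun x u p => f x u p * g x u p * (lB x u p - lA x u p).
Let mu : fn3 := fun x u p => 1 / (f x u p * g x u p * (lB x u p - lA x u p)).

Lemma weight_nonzero x u p : U x u p -> h x u p <> 0.
Proof.
  intros H. unfold h. repeat apply Rmult_integral_contrapositive_currified; auto.
  intros E. apply (Hne x u p H). lra.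
Qed.

Local Ltac nonzero H := repeat split;
  first [ exact (Hfnz _ _ _ H) | exact (Hgnz _ _ _ H) | exact (weight_nonzero _ _ _ H)
        | intros ?E; apply (Hne _ _ _ H); lra ].

Lemma weight_vapp V x u p : U x u p ->
  vapp V h x u p = vapp V f x u p * g x u p * (lB x u p - lA x u p)
    + f x u p * vapp V g x u p * (lB x u p - lA x u p)
    + f x u p * g x u p * (vapp V lB x u p - vapp V lA x u p).
Proof.
  intros H.
  assert (Pf := smooth_on_pdiff_at U f x u p Hf H).
  assert (Pg := smooth_on_pdiff_at U g x u p Hg H).
  assert (PA := smooth_on_pdiff_at U lA x u p HlA H).
  assert (PB := smooth_on_pdiff_at U lB x u p HlB H).
  unfold h. rewrite (vapp_mult V (fun x u p => f x u p * g x u p)), (vapp_mult V f g),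
    (vapp_minus V lB lA) by solve_pdiff.
  ring.
Qed.

Lemma weight_A_derivative x u p : U x u p ->
  vapp (Afield phi) h x u p = (d_p phi x u p - lA x u p) * h x u p.
Proof.
  intros H. rewrite weight_vapp, HAg, HdetA, HdetB by exact H.
  unfold h. field. nonzero H.
Qed.

Lemma weight_X_derivative x u p : U x u p ->
  vapp (Xf lA) h x u p = d_p lA x u p * h x u p.
Proof.
  intros H.
  assert (Xf_f : vapp (Xf lA) f x u p = f x u p * rho lA lB x u p).
  { rewrite <- (Hrho x u p H). field. exact (Hfnz x u p H). }
  rewrite weight_vapp, HXg, Xf_f by exact H.
  unfold h, rho. rewrite (Xf_shift lA lB lA). field. nonzero H.
Qed.

Lemma inv_weight_smooth : smooth_on U mu.
Proof.
  apply (smooth_on_eq_on U HU (fun x u p => / h x u p)).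
  - intros x u p H. unfold mu, h. field. nonzero H.
  - apply (smooth_on_inv U HU); [exact weight_nonzero |].
    unfold h. repeat apply (smooth_on_mult U HU); try assumption.
    apply (smooth_on_minus U HU); assumption.
Qed.

Lemma inv_weight_vapp V x u p : U x u p -> vapp V mu x u p = - vapp V h x u p / h x u p ^ 2.
Proof.
  intros H.
  rewrite (vapp_eq_on U V mu (fun x u p => / h x u p) x u p HU); [|intros x' u' p' H'|exact H].
  - apply vapp_inv; [unfold h | exact (weight_nonzero x u p H)].
    assert (Pf := smooth_on_pdiff_at U f x u p Hf H).
    assert (Pg := smooth_on_pdiff_at U g x u p Hg H).
    assert (PA := smooth_on_pdiff_at U lA x u p HlA H).
    assert (PB := smooth_on_pdiff_at U lB x u p HlB H).
    solve_pdiff.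
  - unfold mu, h. field. nonzero H'.
Qed.

Lemma symmetry_form_exact :
  local_potentials U (fun x u p => mu x u p * (lA x u p * p - phi x u p))
                     (fun x u p => - (lA x u p * mu x u p)) mu.
Proof.
  assert (Xmu : forall x u p, U x u p -> vapp (Xf lA) mu x u p = - d_p lA x u p * mu x u p).
  { intros x u p H. rewrite inv_weight_vapp, weight_X_derivative by exact H.
    unfold mu, h. field. nonzero H. }
  assert (Amu : forall x u p, U x u p ->
                  vapp (Afield phi) mu x u p = (lA x u p - d_p phi x u p) * mu x u p).
  { intros x u p H. rewrite inv_weight_vapp, weight_A_derivative by exact H.
    unfold mu, h. field. nonzero H. }
  pose proof (symmetry_form_closed U phi lA mu Hphi HlA inv_weight_smooth HdetA Xmu Amu) as Closed.
  apply poincare_lemma.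
  - exact HU.
  - apply (smooth_on_mult U HU); [exact inv_weight_smooth|].
    apply (smooth_on_minus U HU); [apply (smooth_on_mult U HU) | exact Hphi];
      [exact HlA | apply (smooth_on_coord_p U HU)].
  - apply (smooth_on_eq_on U HU (fun x u p => (-1) * (lA x u p * mu x u p))).
    + intros x u p _. ring.
    + apply (smooth_on_mult U HU); [apply (smooth_on_const U HU) | apply (smooth_on_mult U HU)];
        auto using inv_weight_smooth.
  - exact inv_weight_smooth.
  - intros x u p H. apply (Closed x u p H).
  - intros x u p H. apply (Closed x u p H).
  - intros x u p H. apply (Closed x u p H).
Qed.

End Weight.

Lemma product_weight_A_derivative U phi lA lB f g f' g' :
  open3 U -> smooth_on U lA -> smooth_on U lB ->
  smooth_on U f -> smooth_on U g -> smooth_on U f' -> smooth_on U g' ->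
  (forall x u p, U x u p -> f x u p <> 0) -> (forall x u p, U x u p -> f' x u p <> 0) ->
  lambda_determining U phi lA -> lambda_determining U phi lB ->
  (forall x u p, U x u p ->
     vapp (Afield phi) g x u p = (lB x u p - vapp (Afield phi) f x u p / f x u p) * g x u p) ->
  (forall x u p, U x u p ->
     vapp (Afield phi) g' x u p = (lA x u p - vapp (Afield phi) f' x u p / f' x u p) * g' x u p) ->
  forall x u p, U x u p ->
    vapp (Afield phi)
      (fun x u p => f' x u p * g' x u p * f x u p * g x u p * (lB x u p - lA x u p)) x u p
    = d_p phi x u p * (f' x u p * g' x u p * f x u p * g x u p * (lB x u p - lA x u p)).
Proof.
  intros HU HlA HlB Hf Hg Hf' Hg' Hfnz Hf'nz HdetA HdetB HAg HAg' x u p H.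
  assert (Pf' := smooth_on_pdiff_at U f' x u p Hf' H).
  assert (Pg' := smooth_on_pdiff_at U g' x u p Hg' H).
  assert (Pf := smooth_on_pdiff_at U f x u p Hf H).
  assert (Pg := smooth_on_pdiff_at U g x u p Hg H).
  assert (PA := smooth_on_pdiff_at U lA x u p HlA H).
  assert (PB := smooth_on_pdiff_at U lB x u p HlB H).
  rewrite (vapp_eq_on U (Afield phi) _
    (fun x u p => f' x u p * g' x u p * (f x u p * g x u p * (lB x u p - lA x u p))) x u p HU);
    [| intros x' u' p' _; ring | exact H].
  rewrite (vapp_mult _ (fun x u p => f' x u p * g' x u p)), (vapp_mult _ f' g') by solve_pdiff.
  rewrite (weight_A_derivative U phi lA lB f g), HAg' by assumption.
  field. exact (Hf'nz x u p H).
Qed.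

Lemma jacobi_last_multiplier_inv U phi H : open3 U ->
  (forall x u p, U x u p -> H x u p <> 0) -> (forall x u p, U x u p -> pdiff_at H x u p) ->
  (forall x u p, U x u p -> vapp (Afield phi) H x u p = d_p phi x u p * H x u p) ->
  jacobi_last_multiplier U phi (fun x u p => 1 / H x u p).
Proof.
  intros HU Hnz PH HA x u p Hx.
  rewrite (vapp_eq_on U (Afield phi) _ (fun x u p => / H x u p) x u p HU);
    [| intros x' u' p' H'; field; exact (Hnz x' u' p' H') | exact Hx].
  rewrite vapp_inv, HA by auto. field. exact (Hnz x u p Hx).
Qed.

Lemma last_multiplier_of_weights U phi lA lB f g f' g' :
  open3 U -> smooth_on U lA -> smooth_on U lB ->
  smooth_on U f -> smooth_on U g -> smooth_on U f' -> smooth_on U g' ->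
  (forall x u p, U x u p -> lA x u p - lB x u p <> 0 /\
     f x u p <> 0 /\ g x u p <> 0 /\ f' x u p <> 0 /\ g' x u p <> 0) ->
  lambda_determining U phi lA -> lambda_determining U phi lB ->
  (forall x u p, U x u p ->
     vapp (Afield phi) g x u p = (lB x u p - vapp (Afield phi) f x u p / f x u p) * g x u p) ->
  (forall x u p, U x u p ->
     vapp (Afield phi) g' x u p = (lA x u p - vapp (Afield phi) f' x u p / f' x u p) * g' x u p) ->
  jacobi_last_multiplier U phi
    (fun x u p => 1 / (f' x u p * g' x u p * f x u p * g x u p * (lB x u p - lA x u p))).
Proof.
  intros HU HlA HlB Hf Hg Hf' Hg' Hnz HdetA HdetB HAg HAg'.
  apply jacobi_last_multiplier_inv; [exact HU | | |].
  - intros x u p H. destruct (Hnz x u p H) as (Nab & Nf & Ng & Nf' & Ng').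
    repeat apply Rmult_integral_contrapositive_currified; auto. intros E. apply Nab. lra.
  - intros x u p H.
    assert (Pf' := smooth_on_pdiff_at U f' x u p Hf' H).
    assert (Pg' := smooth_on_pdiff_at U g' x u p Hg' H).
    assert (Pf := smooth_on_pdiff_at U f x u p Hf H).
    assert (Pg := smooth_on_pdiff_at U g x u p Hg H).
    assert (PA := smooth_on_pdiff_at U lA x u p HlA H).
    assert (PB := smooth_on_pdiff_at U lB x u p HlB H).
    solve_pdiff.
  - apply product_weight_A_derivative; try assumption; intros x u p H; apply (Hnz x u p H).
Qed.

Lemma integrating_factor_of_potentials U phi lam mu :
  local_potentials U (fun x u p => mu x u p * (lam x u p * p - phi x u p))
                     (fun x u p => - (lam x u p * mu x u p)) mu ->
  integrating_factor U phi mu.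
Proof.
  intros Hpot x u p H. destruct (Hpot x u p H) as (V & I & HV & HI & HD).
  exists V, I. split; [exact HV | split; [exact HI |]].
  intros x' u' p' q H'. destruct (HD x' u' p' H') as (E1 & E2 & E3).
  rewrite E1, E2, E3. ring.
Qed.

Lemma first_integrals_of_potentials U phi lam mu :
  local_potentials U (fun x u p => mu x u p * (lam x u p * p - phi x u p))
                     (fun x u p => - (lam x u p * mu x u p)) mu ->
  forall x u p, U x u p -> exists (V : R -> R -> R -> Prop) (I : fn3),
    open_nbhd_in U V x u p /\ first_integral_assoc V phi zero3 one3 lam I /\
    forall x' u' p', V x' u' p' ->
      d_x I x' u' p' = mu x' u' p' * (lam x' u' p' * p' - phi x' u' p') /\
      d_u I x' u' p' = - (lam x' u' p' * mu x' u' p') /\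
      d_p I x' u' p' = mu x' u' p'.
Proof.
  intros Hpot x u p H. destruct (Hpot x u p H) as (V & I & HV & HI & HD).
  exists V, I. split; [exact HV | split; [split; [exact HI |] | exact HD]].
  intros x' u' p' H'. destruct (HD x' u' p' H') as (E1 & E2 & E3).
  unfold vapp, prol, Afield, Aplus, zero3, one3. cbn [vx vu vp].
  rewrite (vapp_const _ 1), (vapp_const _ 0), E1, E2, E3. split; ring.
Qed.
Theorem theorem4
  (U : R -> R -> R -> Prop) (phi lam1 lam2 f1 f2 g1 g2 : fn3)
  (xi1 eta1 l01 xi2 eta2 l02 : fn3)
  (HU : open3 U)
  (Hphi : smooth_on U phi)
  (* (v_i, l0i) are generalized C^oo-symmetries, non-equivalent, with
     canonical representatives (d_u, lam_i) *)
  (Hs1 : gen_sym U phi xi1 eta1 l01)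
  (Hs2 : gen_sym U phi xi2 eta2 l02)
  (HQ1 : forall x u p, U x u p -> eta1 x u p - xi1 x u p * p <> 0)
  (HQ2 : forall x u p, U x u p -> eta2 x u p - xi2 x u p * p <> 0)
  (Hc1 : forall x u p, U x u p -> lam1 x u p = canon_lambda phi xi1 eta1 l01 x u p)
  (Hc2 : forall x u p, U x u p -> lam2 x u p = canon_lambda phi xi2 eta2 l02 x u p)
  (Hne : ~ A_equiv U phi xi1 eta1 l01 xi2 eta2 l02)
  (Hl1 : smooth_on U lam1) (Hl2 : smooth_on U lam2)
  (Hf1 : smooth_on U f1) (Hf2 : smooth_on U f2)
  (Hg1 : smooth_on U g1) (Hg2 : smooth_on U g2)
  (Hnz : forall x u p, U x u p ->
     lam1 x u p - lam2 x u p <> 0 /\ f1 x u p <> 0 /\ f2 x u p <> 0 /\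
     g1 x u p <> 0 /\ g2 x u p <> 0)
  (* rho = (X1(lam2) - X2(lam1)) / (lam1 - lam2);  X1(f2)/f2 = X2(f1)/f1 = rho *)
  (Hrho : forall x u p, U x u p ->
     vapp (Xf lam1) f2 x u p / f2 x u p
       = (vapp (Xf lam1) lam2 x u p - vapp (Xf lam2) lam1 x u p)
         / (lam1 x u p - lam2 x u p) /\
     vapp (Xf lam2) f1 x u p / f1 x u p
       = (vapp (Xf lam1) lam2 x u p - vapp (Xf lam2) lam1 x u p)
         / (lam1 x u p - lam2 x u p))
  (* A(g_i) = rho_i g_i with rho_i = lam_i - A(f_i)/f_i;
     Y2(g1) = 0, Y1(g2) = 0 with Y_i = f_i X_i *)
  (Hg : forall x u p, U x u p ->
     vapp (Afield phi) g1 x u p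
       = (lam1 x u p - vapp (Afield phi) f1 x u p / f1 x u p) * g1 x u p /\
     f2 x u p * vapp (Xf lam2) g1 x u p = 0 /\
     vapp (Afield phi) g2 x u p
       = (lam2 x u p - vapp (Afield phi) f2 x u p / f2 x u p) * g2 x u p /\
     f1 x u p * vapp (Xf lam1) g2 x u p = 0) :
  let mu1 : fn3 := fun x u p =>
    1 / (f2 x u p * g2 x u p * (lam2 x u p - lam1 x u p)) in
  let mu2 : fn3 := fun x u p =>
    1 / (f1 x u p * g1 x u p * (lam1 x u p - lam2 x u p)) in
  let M : fn3 := fun x u p =>
    1 / (f1 x u p * g1 x u p * f2 x u p * g2 x u p * (lam2 x u p - lam1 x u p)) in
  (* (1) *)
  (integrating_factor U phi mu1 /\ integrating_factor U phi mu2 /\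
   (forall x u p, U x u p -> exists (V : R -> R -> R -> Prop) (I1 : fn3),
      open_nbhd_in U V x u p /\
      first_integral_assoc V phi zero3 one3 lam1 I1 /\
      forall x' u' p', V x' u' p' ->
        d_x I1 x' u' p' = mu1 x' u' p' * (lam1 x' u' p' * p' - phi x' u' p') /\
        d_u I1 x' u' p' = - (lam1 x' u' p' * mu1 x' u' p') /\
        d_p I1 x' u' p' = mu1 x' u' p') /\
   (forall x u p, U x u p -> exists (V : R -> R -> R -> Prop) (I2 : fn3),
      open_nbhd_in U V x u p /\
      first_integral_assoc V phi zero3 one3 lam2 I2 /\
      forall x' u' p', V x' u' p' ->
        d_x I2 x' u' p' = mu2 x' u' p' * (lam2 x' u' p' * p' - phi x' u' p') /\
        d_u I2 x' u' p' = - (lam2 x' u' p' * mu2 x' u' p') /\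
        d_p I2 x' u' p' = mu2 x' u' p')) /\
  (* (2) *)
  jacobi_last_multiplier U phi M.
Proof.
  intros mu1 mu2 M.
  assert (Hdet1 := canonical_lambda_determining U phi xi1 eta1 l01 lam1 HU Hphi Hs1 HQ1 Hc1 Hl1).
  assert (Hdet2 := canonical_lambda_determining U phi xi2 eta2 l02 lam2 HU Hphi Hs2 HQ2 Hc2 Hl2).
  assert (Pt : forall x u p, U x u p ->
    lam2 x u p - lam1 x u p <> 0 /\ vapp (Xf lam2) g1 x u p = 0 /\
    vapp (Xf lam1) g2 x u p = 0 /\ vapp (Xf lam2) f1 x u p / f1 x u p = rho lam2 lam1 x u p).
  { intros x u p H. destruct (Hnz x u p H) as (N12 & Nf1 & Nf2 & _).
    destruct (Hg x u p H) as (_ & Y21 & _ & Y12). repeat split.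
    - intros E. apply N12. lra.
    - apply (Rmult_eq_reg_l (f2 x u p)); [rewrite Rmult_0_r; exact Y21 | exact Nf2].
    - apply (Rmult_eq_reg_l (f1 x u p)); [rewrite Rmult_0_r; exact Y12 | exact Nf1].
    - rewrite (proj2 (Hrho x u p H)). exact (rho_sym lam1 lam2 x u p N12). }
  assert (Exact1 : local_potentials U (fun x u p => mu1 x u p * (lam1 x u p * p - phi x u p))
                     (fun x u p => - (lam1 x u p * mu1 x u p)) mu1).
  { apply (symmetry_form_exact U phi lam1 lam2 f2 g2); try assumption; intros x u p H;
      generalize (Hnz x u p H) (Hg x u p H) (Hrho x u p H) (Pt x u p H); tauto. }
  assert (Exact2 : local_potentials U (fun x u p => mu2 x u p * (lam2 x u p * p - phi x u p))
                     (fun x u p => - (lam2 x u p * mu2 x u p)) mu2).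
  { apply (symmetry_form_exact U phi lam2 lam1 f1 g1); try assumption; intros x u p H;
      generalize (Hnz x u p H) (Hg x u p H) (Hrho x u p H) (Pt x u p H); tauto. }
  split; [repeat split|].
  - exact (integrating_factor_of_potentials _ _ _ _ Exact1).
  - exact (integrating_factor_of_potentials _ _ _ _ Exact2).
  - exact (first_integrals_of_potentials _ _ _ _ Exact1).
  - exact (first_integrals_of_potentials _ _ _ _ Exact2).
  - apply (last_multiplier_of_weights U phi lam1 lam2 f2 g2 f1 g1); try assumption;
      intros x u p H; generalize (Hnz x u p H) (Hg x u p H); tauto.
Qed.
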